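(* Fix $z\in\{0,1\}$ and let $(\hat w^{*+}_{z,ij})_{ij:Z_{ij}=z}$ be the solution of the program (P): minimize $\sum_{ij:Z_{ij}=z}\psi(w_{ij})$ subject to $\bigl|\sum_{ij:Z_{ij}=z}w_{ij}B_k(X_{ij})-B^*_k\bigr|\le\delta_k$ for $k=1,\dots,K$ and $w_{ij}\ge0$ for all $ij$ with $Z_{ij}=z$. Let $R=\{ij: Z_{ij}=z,\ \hat w^{*+}_{z,ij}\neq0\}$ be the set of units receiving non-zero weight. Consider the relaxed program (P$_R$) over the units in $R$ only and without the non-negativity constraint: minimize $\sum_{ij\in R}\psi(w_{ij})$ subject to $\bigl|\sum_{ij\in R}w_{ij}B_k(X_{ij})-B^*_k\bigr|\le\delta_k$ for $k=1,\dots,K$. Then solving (P) is equivalent to the two-step procedure (I) restrict to $R$, discarding all other units; (II) solve (P$_R$): the solution of (P$_R$), extended by zero outside $R$, coincides with the solution $\hat w^{*+}_{z}$ of (P).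
   Context: There are $m$ studies with $n=\sum_i n_i$ individuals in total; individual $ij$ has binary treatment $Z_{ij}$ and covariates $X_{ij}\in\mathbb{R}^p$; all sums over $ij$ are over these study individuals. $B=(B_1,\dots,B_K)^\top$ are basis functions of the covariates with $B_1\equiv1$; $B^*=(B^*_1,\dots,B^*_K)^\top\in\mathbb{R}^K$ is a target covariate profile with $B^*_1=1$; $\delta=(\delta_1,\dots,\delta_K)$ are tolerances with $\delta_k\ge0$ and $\delta_1=0$ (so the first constraint enforces $\sum w_{ij}=1$). $\psi:\mathbb{R}\to\mathbb{R}$ is a convex dispersion function (differentiable, with $\psi'$ invertible). *)

From HB Require Import structures.
From mathcomp Require Import all_boot all_order all_algebra.
From mathcomp Require Import reals topology normedtype derive.
Set Implicit Arguments. Unset Strict Implicit. Unset Printing Implicit Defensive.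
Import Order.TTheory GRing.Theory Num.Theory numFieldNormedType.Exports.
Local Open Scope ring_scope.

(* Individuals: individual ij = (i ; j) with i : 'I_m a study and j : 'I_(n i). *)
Definition indiv (m : nat) (n : 'I_m -> nat) : finType := {i : 'I_m & 'I_(n i)}.

Section Programs.
Variables (R : realType) (I : finType) (p K : nat).
Variables (Z : I -> bool) (X : I -> 'rV[R]_p) (z : bool).
Variables (B : 'I_K -> 'rV[R]_p -> R) (Bstar : 'I_K -> R) (delta : 'I_K -> R).
Variable psi : R -> R.

Definition convex_fun (f : R -> R) : Prop :=
  forall x y t, 0 <= t <= 1 -> f (t * x + (1 - t) * y) <= t * f x + (1 - t) * f y.

Definition feasibleP (w : I -> R) : Prop :=
  (forall k : 'I_K,
     `| \sum_(ij | Z ij == z) w ij * B k (X ij) - Bstar k | <= delta k) /\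
  (forall ij, Z ij == z -> 0 <= w ij).

Definition optP (w : I -> R) : Prop :=
  feasibleP w /\
  forall v, feasibleP v ->
    \sum_(ij | Z ij == z) psi (w ij) <= \sum_(ij | Z ij == z) psi (v ij).

Definition feasiblePR (Rs : {set I}) (w : I -> R) : Prop :=
  forall k : 'I_K,
    `| \sum_(ij in Rs) w ij * B k (X ij) - Bstar k | <= delta k.

Definition optPR (Rs : {set I}) (w : I -> R) : Prop :=
  feasiblePR Rs w /\
  forall v, feasiblePR Rs v ->
    \sum_(ij in Rs) psi (w ij) <= \sum_(ij in Rs) psi (v ij).

End Programs.

(* On the set R of units given non-zero weight by the optimum w of (P) the
   weights are positive, so for v feasible for (P_R) and small t > 0 the weights
   w + t (v - w) on R, w off R, are still non-negative; the balance constraints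
   being convex, they are feasible for (P), and optimality of w together with
   convexity of psi gives sum psi w <= sum psi v over R.  The optimum of (P_R)
   is unique because psi is strictly convex: if psi met a chord at an interior
   point it would be affine on an interval, where derive1 psi is constant,
   against its injectivity. *)

From HB Require Import structures.
From mathcomp Require Import all_boot all_order all_algebra.
From mathcomp Require Import reals topology normedtype derive.
From mathcomp Require Import ring lra.
Set Implicit Arguments. Unset Strict Implicit. Unset Printing Implicit Defensive.
Import Order.TTheory GRing.Theory Num.Theory numFieldNormedType.Exports.
Local Open Scope ring_scope.

Lemma derive1_affine_on (R : realType) (f : R -> R) (a b s k u : R) :
  (forall t, a < t < b -> f t = s * t + k) -> a < u < b -> derive1 f u = s.
Proof.
move=> fE aub; rewrite derive1E.
have -> : 'D_1 f u = 'D_1 (fun t => s * t + k) u.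
  apply: near_eq_derive; near=> t; apply: fE.
  by near: t; apply: (near_in_itvoo (a := a)); rewrite in_itv.
have affine_derive : is_derive u 1 (fun t : R => s * t + k) (s * 1 + 0).
  exact: is_deriveD.
by rewrite derive_val mulr1 addr0.
Unshelve. all: by end_near.
Qed.

Lemma injective_derive1_not_affine (R : realType) (f : R -> R) (a b s k : R) :
  injective (derive1 f) -> a < b -> ~ (forall t, a < t < b -> f t = s * t + k).
Proof.
move=> f'_inj ab fE.
have : (2 * a + b) / 3 = (a + 2 * b) / 3.
  by apply: f'_inj; rewrite !(derive1_affine_on fE) //; apply/andP; split; lra.
lra.
Qed.

Section StrictConvexity.
Variables (R : realType) (f : R -> R).

Definition chord (x y t : R) := f x + (f y - f x) / (y - x) * (t - x).

Hypothesis f_convex : convex_fun f.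

Lemma convex_le_chord x y t : x < y -> x <= t <= y -> f t <= chord x y t.
Proof.
move=> xy /andP[xt ty]; have yx0 : 0 < y - x by rewrite subr_gt0.
pose L := (y - t) / (y - x).
have tE : t = L * x + (1 - L) * y by rewrite /L; field; rewrite gt_eqF.
have L01 : 0 <= L <= 1.
  by rewrite /L ler_pdivrMr // mul1r divr_ge0 ?subr_ge0 ?(ltW xy) //=; lra.
have -> : chord x y t = L * f x + (1 - L) * f y.
  by rewrite /chord /L; field; rewrite gt_eqF.
by rewrite {1}tE; apply: f_convex.
Qed.

Lemma convex_chord_eq x y m t : x < m < y -> chord x y m <= f m ->
  x <= t <= m -> f t = chord x y t.
Proof.
move=> /andP[xm my] hm /andP[xt tm].
have xy : x < y by lra.
have ty : t < y by lra.
apply/eqP; rewrite eq_le convex_le_chord ?xt ?(ltW ty) //=.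
have yt0 : 0 < y - t by rewrite subr_gt0.
have tmy : t <= m <= y by rewrite tm ltW.
have := convex_le_chord ty tmy.
set L := (y - m) / (y - t).
have L0 : 0 < L by rewrite divr_gt0 // subr_gt0.
have -> : chord t y m = L * f t + (1 - L) * f y.
  by rewrite /chord /L; field; rewrite gt_eqF.
have hmE : chord x y m = L * chord x y t + (1 - L) * f y.
  by rewrite /chord /L; field; rewrite !gt_eqF // subr_gt0.
rewrite hmE in hm => hL; rewrite -(ler_pM2l L0); lra.
Qed.

Lemma convex_midpoint x y : f ((x + y) / 2) <= (f x + f y) / 2.
Proof.
have half01 : (0 <= 2^-1 :> R) && (2^-1 <= 1 :> R) by apply/andP; split; lra.
have := @f_convex x y 2^-1 half01.
have -> : 1 - 2^-1 = 2^-1 :> R by field.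
by rewrite -!mulrDr !(mulrC 2^-1).
Qed.

Lemma convex_midpoint_lt : injective (derive1 f) ->
  forall x y, x != y -> f ((x + y) / 2) < (f x + f y) / 2.
Proof.
move=> f'_inj x y; wlog xy : x y / x < y => [wlog_xy|_].
  rewrite neq_lt => /orP[xy|yx]; first by apply: wlog_xy; rewrite // lt_eqF.
  by rewrite addrC [f x + _]addrC; apply: wlog_xy; rewrite // lt_eqF.
rewrite ltNge; apply/negP => hm.
set m := (x + y) / 2.
have xmy : x < m < y by apply/andP; split; rewrite /m; lra.
have xm : x < m by rewrite /m; lra.
have chord_m : chord x y m = (f x + f y) / 2.
  by rewrite /chord /m; field; rewrite subr_eq0 gt_eqF.
rewrite -chord_m in hm.
apply: (injective_derive1_not_affine (s := (f y - f x) / (y - x))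
  (k := f x - (f y - f x) / (y - x) * x) f'_inj xm) => t /andP[xt tm].
by rewrite (convex_chord_eq xmy hm) ?ltW ?xt ?tm // /chord; ring.
Qed.

End StrictConvexity.

Lemma big_split_subset (V : nmodType) (I : finType) (P : pred I) (S : {set I})
    (F : I -> V) : {subset S <= P} ->
  \sum_(i | P i) F i = \sum_(i in S) F i + \sum_(i | P i && (i \notin S)) F i.
Proof.
move=> SP; rewrite (bigID (mem S)) /=; congr (_ + _).
by apply: eq_bigl => i; rewrite andb_idl //; apply: SP.
Qed.

Lemma big_subset_support (V : nmodType) (I : finType) (P : pred I)
    (S : {set I}) (F : I -> V) : {subset S <= P} ->
  (forall i, P i -> i \notin S -> F i = 0) ->
  \sum_(i | P i) F i = \sum_(i in S) F i.
Proof.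
move=> SP F0; rewrite (big_split_subset _ SP) [X in _ + X]big1 ?addr0 //.
by move=> i /andP[]; apply: F0.
Qed.

Lemma exists_small_step (R : realFieldType) (I : finType) (S : {set I})
    (w d : I -> R) : {in S, forall i, 0 < w i} ->
  exists2 t, 0 < t <= 1 & {in S, forall i, t * `|d i| <= w i}.
Proof.
move=> w_gt0; pose T := \sum_(i in S) `|d i| / w i.
have T_ge0 : 0 <= T by apply: sumr_ge0 => i /w_gt0 wi; rewrite divr_ge0 // ltW.
exists (1 + T)^-1; first by rewrite invr_gt0 invf_le1 ?lerDl; lra.
move=> i iS; have wi := w_gt0 i iS.
have : `|d i| / w i <= T.
  rewrite /T (bigD1 i) //= lerDl sumr_ge0 // => j /andP[/w_gt0 wj _].
  by rewrite divr_ge0 // ltW.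
rewrite ler_pdivrMr // => hd; rewrite mulrC ler_pdivrMr; nra.
Qed.

Section Programs.
Variables (R : realType) (I : finType) (p K : nat).
Variables (Z : I -> bool) (X : I -> 'rV[R]_p) (z : bool).
Variables (B : 'I_K -> 'rV[R]_p -> R) (Bstar delta : 'I_K -> R).
Variable psi : R -> R.
Hypothesis psi_convex : convex_fun psi.

Local Notation feasibleP := (feasibleP Z X z B Bstar delta).
Local Notation optP := (optP Z X z B Bstar delta psi).
Local Notation feasiblePR := (feasiblePR X B Bstar delta).
Local Notation optPR := (optPR X B Bstar delta psi).

Lemma eq_feasiblePR (S : {set I}) (v w : I -> R) :
  {in S, v =1 w} -> feasiblePR S v -> feasiblePR S w.
Proof.
move=> vw hv k.
have <- : \sum_(i in S) v i * B k (X i) = \sum_(i in S) w i * B k (X i).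
  by apply: eq_bigr => i /vw ->.
exact: hv.
Qed.

Lemma feasiblePR_convex (S : {set I}) (v w : I -> R) (t : R) : 0 <= t <= 1 ->
  feasiblePR S v -> feasiblePR S w ->
  feasiblePR S (fun i => t * v i + (1 - t) * w i).
Proof.
move=> /andP[t0 t1] hv hw k.
have -> : \sum_(i in S) (t * v i + (1 - t) * w i) * B k (X i) - Bstar k =
    t * (\sum_(i in S) v i * B k (X i) - Bstar k) +
    (1 - t) * (\sum_(i in S) w i * B k (X i) - Bstar k).
  under eq_bigr do rewrite mulrDl -!mulrA.
  by rewrite big_split /= -!mulr_sumr; ring.
have t1_ge0 : 0 <= 1 - t by rewrite subr_ge0.
rewrite (le_trans (ler_normD _ _)) // !normrM (ger0_norm t0) (ger0_norm t1_ge0).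
have := hv k; have := hw k; nra.
Qed.

Lemma sum_convex (S : {set I}) (v w : I -> R) (t : R) : 0 <= t <= 1 ->
  \sum_(i in S) psi (t * v i + (1 - t) * w i) <=
  t * \sum_(i in S) psi (v i) + (1 - t) * \sum_(i in S) psi (w i).
Proof.
move=> t01; rewrite !mulr_sumr -big_split.
by apply: ler_sum => i _; apply: psi_convex.
Qed.

Lemma sum_midpoint_lt (S : {set I}) (v w : I -> R) (i0 : I) :
  injective (derive1 psi) -> i0 \in S -> v i0 != w i0 ->
  \sum_(i in S) psi ((v i + w i) / 2) <
  (\sum_(i in S) psi (v i) + \sum_(i in S) psi (w i)) / 2.
Proof.
move=> psi'_inj i0S vw; rewrite mulrDl !mulr_suml -big_split /=.
rewrite (bigD1 i0) // [X in _ < X](bigD1 i0) //= -mulrDl.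
apply: ltr_leD; first exact: convex_midpoint_lt.
by apply: ler_sum => i _; rewrite -mulrDl; apply: convex_midpoint.
Qed.

Lemma optPR_unique (S : {set I}) (v w : I -> R) : injective (derive1 psi) ->
  optPR S v -> optPR S w -> {in S, v =1 w}.
Proof.
move=> psi'_inj [hv v_min] [hw w_min] i iS; apply/eqP/negPn/negP => vw.
have hmid : feasiblePR S (fun i => (v i + w i) / 2).
  have half01 : (0 <= 2^-1 :> R) && (2^-1 <= 1 :> R) by apply/andP; split; lra.
  by apply: eq_feasiblePR (feasiblePR_convex half01 hv hw) => j _; field.
have := v_min _ hmid; have := v_min _ hw; have := w_min _ hv.
have := sum_midpoint_lt psi'_inj iS vw; lra.
Qed.

Section Support.
Variables (S : {set I}) (w : I -> R).
Hypothesis S_sub : {subset S <= [pred i | Z i == z]}.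
Hypothesis w_eq0 : forall i, Z i == z -> i \notin S -> w i = 0.

Lemma balance_support k :
  \sum_(i | Z i == z) w i * B k (X i) = \sum_(i in S) w i * B k (X i).
Proof. by apply: big_subset_support => // i zi /(w_eq0 zi) ->; rewrite mul0r. Qed.

Lemma feasiblePR_of_feasibleP : feasibleP w -> feasiblePR S w.
Proof. by move=> [hw _] k; rewrite -balance_support. Qed.

Lemma feasibleP_of_feasiblePR :
  (forall i, Z i == z -> 0 <= w i) -> feasiblePR S w -> feasibleP w.
Proof. by move=> w_ge0 hw; split=> // k; rewrite balance_support. Qed.

End Support.

Lemma optP_optPR (w : I -> R) :
  optP w -> optPR [set i | (Z i == z) && (w i != 0)] w.
Proof.
move=> [w_feas w_min]; have w_ge0 := w_feas.2; set S := [set _ | _].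
have S_sub : {subset S <= [pred i | Z i == z]} by move=> i; rewrite inE => /andP[].
have w_eq0 i : Z i == z -> i \notin S -> w i = 0.
  by move=> zi; rewrite inE zi negbK => /eqP.
have w_gt0 : {in S, forall i, 0 < w i}.
  by move=> i; rewrite inE => /andP[zi wi]; rewrite lt_def wi w_ge0.
have hw : feasiblePR S w := feasiblePR_of_feasibleP S_sub w_eq0 w_feas.
split=> // v hv.
have [t /andP[t_gt0 t_le1] t_small] :=
  exists_small_step (fun i => v i - w i) w_gt0.
have t01 : 0 <= t <= 1 by rewrite t_le1 ltW.
pose W i := if i \in S then t * v i + (1 - t) * w i else w i.
have W_off i : i \notin S -> W i = w i by rewrite /W => /negbTE ->.
have hW : feasibleP W.
  apply: (feasibleP_of_feasiblePR S_sub).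
  - by move=> i zi iS; rewrite W_off // w_eq0.
  - move=> i zi; rewrite /W; case: ifP => iS; last exact: w_ge0.
    have := t_small i iS; have := ler_norm (w i - v i); rewrite distrC; nra.
  - apply: eq_feasiblePR (feasiblePR_convex t01 hv hw) => i iS.
    by rewrite /W iS.
have W_rest : \sum_(i | (Z i == z) && (i \notin S)) psi (W i) =
              \sum_(i | (Z i == z) && (i \notin S)) psi (w i).
  by apply: eq_bigr => i /andP[_ /W_off ->].
have W_in : \sum_(i in S) psi (W i) =
            \sum_(i in S) psi (t * v i + (1 - t) * w i).
  by apply: eq_bigr => i iS; rewrite /W iS.
have := w_min W hW; rewrite !(big_split_subset _ S_sub) W_rest lerD2r W_in.
move=> W_ge; have W_conv := sum_convex S v w t01.
rewrite -(ler_pM2l t_gt0); lra.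
Qed.

End Programs.

Theorem theorem1 (R : realType) (m : nat) (n : 'I_m -> nat) (p K : nat)
  (Z : indiv n -> bool) (X : indiv n -> 'rV[R]_p)
  (B : 'I_K.+1 -> 'rV[R]_p -> R) (Bstar : 'I_K.+1 -> R) (delta : 'I_K.+1 -> R)
  (psi : R -> R)
  (hB1 : forall x, B ord0 x = 1) (hBstar1 : Bstar ord0 = 1)
  (hdelta : forall k, 0 <= delta k) (hdelta1 : delta ord0 = 0)
  (hconv : convex_fun psi) (hdiff : forall x : R, derivable (psi : R -> R) x 1)
  (hinv : injective (derive1 psi))
  (z : bool) (what : indiv n -> R) :
  optP Z X z B Bstar delta psi what ->
  let Rs := [set ij | (Z ij == z) && (what ij != 0)] in
  (exists v, optPR X B Bstar delta psi Rs v) /\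
  (forall v, optPR X B Bstar delta psi Rs v ->
     forall ij, Z ij == z -> (if ij \in Rs then v ij else 0) = what ij).
Proof.
move=> what_opt Rs; have what_optR := optP_optPR hconv what_opt.
split=> [|v v_opt ij zij]; first by exists what.
case: ifPn => ijR; first exact: (optPR_unique hconv hinv v_opt what_optR ijR).
by move: ijR; rewrite inE zij negbK => /eqP.
Qed.
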